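(* Let $0<q<1$ and take $p=q$. Let $\tilde P_n(x)=\sum_{k=0}^n\tilde b_{k,n}x^k$ be the orthonormal polynomials (positive leading coefficients) for the moment sequence $\tilde s_0=q^{-1/2}(1-(1-q))=q^{1/2}$, $\tilde s_n=(q;q)_nq^{-(n+1)^2/2}$ ($n\ge1$), and let $b_{k,n}=(-1)^{n+k}q^{n/2+1/4}\begin{bmatrix}n\\k\end{bmatrix}_q\frac{q^{k^2+k/2}}{(q;q)_k}$ be the coefficients of the orthonormal polynomials for $s_n=(q;q)_nq^{-(n+1)^2/2}$. Then for $0\le k\le n$, \[ \tilde b_{k,n}=\tilde C_n (-1)^k\begin{bmatrix}n\\k\end{bmatrix}_q \frac{q^{k^2+k/2}}{(q;q)_{k+1}}\left[1-q^{k+1}-(1-q^k)(1-q^{n+1})\right],\qquad \tilde C_n=(-1)^n q^{-n/2-1/4}, \] i.e. $\tilde b_{k,n}=b_{k,n}\,q^{-n-1/2}\left[1-\frac{(1-q^k)(1-q^{n+1})}{1-q^{k+1}}\right]$. Moreover $\tilde D_n=q^{n+1}D_n$ where $D_n=\det(s_{i+j})_{0\le i,j\le n}$, $\tilde D_n=\det(\tilde s_{i+j})_{0\le i,j\le n}$. Finally, the monic polynomials $\tilde p_n=\tilde P_n/\tilde b_{n,n}$ satisfy $\tilde p_n(x)=(x-\tilde c_n)\tilde p_{n-1}(x)-\tilde\lambda_n\tilde p_{n-2}(x)$ ($n\ge1$, $\tilde p_{-1}=0$, $\tilde p_0=1$) with \[ \tilde c_n=\left(1+q^3-(1+q^2)q^n\right)q^{-2n-1/2},\qquad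 \tilde \lambda_{n+1}=(1-q^n)^2q^{-4n}. \]
   Context: $(a;q)_n=\prod_{k=1}^n(1-aq^{k-1})$ for $n\in\{0,1,\dots\}\cup\{\infty\}$; $\begin{bmatrix}n\\k\end{bmatrix}_q=\frac{(q;q)_n}{(q;q)_k(q;q)_{n-k}}$. Orthonormal polynomials for a positive definite moment sequence $(u_n)$ are $P_n(x)=\frac{1}{\sqrt{E_{n-1}E_n}}\det\begin{pmatrix}u_0&\cdots&u_n\\ \vdots&&\vdots\\ u_{n-1}&\cdots&u_{2n-1}\\ 1&\cdots&x^n\end{pmatrix}$, $E_n=\det(u_{i+j})_{0\le i,j\le n}$, $E_{-1}=1$. *)

From HB Require Import structures.
From mathcomp Require Import all_boot all_order all_algebra.
Set Implicit Arguments. Unset Strict Implicit. Unset Printing Implicit Defensive.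
Import Order.TTheory GRing.Theory Num.Theory.
Local Open Scope ring_scope.

Section Defs.
Variable R : rcfType.

Definition qpoch (a q : R) (n : nat) : R := \prod_(k < n) (1 - a * q ^+ k).

Definition qbinom (q : R) (n k : nat) : R :=
  qpoch q q n / (qpoch q q k * qpoch q q (n - k)).

Definition hankel_det (u : nat -> R) (n : nat) : R :=
  \det (\matrix_(i < n.+1, j < n.+1) u (i + j)%N).

Definition hankel_det_prev (u : nat -> R) (n : nat) : R :=
  if n is m.+1 then hankel_det u m else 1.

Definition orthonormal_poly (u : nat -> R) (n : nat) : {poly R} :=
  (Num.sqrt (hankel_det_prev u n * hankel_det u n))^-1 *:
  \det (\matrix_(i < n.+1, j < n.+1)
          (if (i < n)%N then (u (i + j)%N)%:P else 'X^j)).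

Definition mom_s (q : R) (n : nat) : R :=
  qpoch q q n * (Num.sqrt q) ^- ((n.+1) ^ 2).

Definition mom_st (q : R) (n : nat) : R :=
  if n is 0 then (Num.sqrt q)^-1 * (1 - (1 - q)) else mom_s q n.

Definition bcoef (q : R) (k n : nat) : R :=
  (-1) ^+ (n + k) * ((Num.sqrt q) ^+ n * Num.sqrt (Num.sqrt q)) * qbinom q n k
  * (q ^+ (k ^ 2) * (Num.sqrt q) ^+ k) / qpoch q q k.

Definition Ct (q : R) (n : nat) : R :=
  (-1) ^+ n * ((Num.sqrt q) ^+ n * Num.sqrt (Num.sqrt q))^-1.

Definition ct (q : R) (n : nat) : R :=
  (1 + q ^+ 3 - (1 + q ^+ 2) * q ^+ n) * (q ^+ (2 * n) * Num.sqrt q)^-1.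

(* tilde lambda_{n+1} = (1-q^n)^2 q^{-4n}; indexed so that lt q n = tilde lambda_n *)
Definition lt_coef (q : R) (n : nat) : R :=
  (1 - q ^+ n.-1) ^+ 2 * (q ^+ (4 * n.-1))^-1.

Definition monic_pt (q : R) (n : nat) : {poly R} :=
  ((orthonormal_poly (mom_st q) n)`_n)^-1 *: orthonormal_poly (mom_st q) n.

End Defs.

(* Let L be the moment functional L(x^k) = u_k.  If p has degree n and L(x^i p) = 0
   for i < n, then p is proportional to the cofactor expansion along the last row of
   the determinant defining P_n: their difference has degree < n and is annihilated
   by the invertible Hankel matrix of order n.  Hence P_n = p / (c sqrt h) and
   D_n = D_(n-1) h, where c is the leading coefficient of p and h = L(x^n p) / c.

   For s the candidate coefficients are (-1)^k [n k]_q q^(C(k,2)) q^(k^2/2+k) / (q;q)_k,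
   and s_(i+k) times the k-th one is q^(-ki) times a polynomial of degree i in q^k.
   Expanding that polynomial, L(x^i p) becomes a combination of the sums
   sum_k (-1)^k [n k]_q q^(C(k,2)) z^k = (z;q)_n at z = q^(-d), d <= i, which vanish
   for d < n (q-binomial theorem).  The same computation works for s~, whose
   bracket adds one linear factor in q^k; only the row i = 0, where s~_0 differs
   from s_0, needs a separate telescoping sum.  The recurrence then follows by
   matching the two leading coefficients and using orthogonality of the remainder. *)

From HB Require Import structures.
From mathcomp Require Import all_boot all_order all_algebra.
From mathcomp Require Import ring zify.
Set Implicit Arguments. Unset Strict Implicit. Unset Printing Implicit Defensive.
Import Order.TTheory GRing.Theory Num.Theory.
Local Open Scope ring_scope.

(** * Moment functionals and Hankel determinants *)

Section Moments.
Variable R : rcfType.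
Implicit Types (u : nat -> R) (p r : {poly R}).

(* [moment u i p] is L(x^i p) for the linear functional L with L(x^k) = u k. *)
Definition moment u i p : R := \sum_(k < size p) u (i + k)%N * p`_k.

Lemma moment_widen u i p N : (size p <= N)%N ->
  moment u i p = \sum_(k < N) u (i + k)%N * p`_k.
Proof.
move=> le_pN; rewrite /moment (big_ord_widen N (fun k => u (i + k)%N * p`_k) le_pN) big_mkcond.
by apply: eq_bigr => k _; case: ltnP => // /(nth_default 0) ->; rewrite mulr0.
Qed.

Lemma moment_poly u i n (E : nat -> R) :
  moment u i (\poly_(k < n) E k) = \sum_(k < n) u (i + k)%N * E k.
Proof.
rewrite (moment_widen _ _ (size_poly _ _)).
by apply: eq_bigr => k _; rewrite coef_poly ltn_ord.
Qed.

Lemma momentD u i p r : moment u i (p + r) = moment u i p + moment u i r.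
Proof.
have le_p := leq_maxl (size p) (size r); have le_r := leq_maxr (size p) (size r).
rewrite !(moment_widen u i (N := maxn (size p) (size r))) ?size_polyD //.
by rewrite -big_split; apply: eq_bigr => k _; rewrite coefD mulrDr.
Qed.

Lemma momentZ u i c p : moment u i (c *: p) = c * moment u i p.
Proof.
rewrite (moment_widen _ _ (size_scale_leq c p)) /moment mulr_sumr.
by apply: eq_bigr => k _; rewrite coefZ mulrCA.
Qed.

Lemma momentN u i p : moment u i (- p) = - moment u i p.
Proof. by rewrite -scaleN1r momentZ mulN1r. Qed.

Lemma momentB u i p r : moment u i (p - r) = moment u i p - moment u i r.
Proof. by rewrite momentD momentN. Qed.

Lemma moment_mulX u i p : moment u i ('X * p) = moment u i.+1 p.
Proof.
have le_Xp : (size ('X * p)%R <= (size p).+1)%N.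
  by apply: leq_trans (size_polyMleq _ _) _; rewrite size_polyX.
rewrite (moment_widen _ _ le_Xp) big_ord_recl coefXM eqxx mulr0 add0r.
by apply: eq_bigr => k _; rewrite coefXM /= addnS.
Qed.

Lemma moment_polyC u i c p : moment u i (c%:P * p) = c * moment u i p.
Proof. by rewrite mul_polyC momentZ. Qed.

(* The cofactors along the last row do not depend on that row; the zero row is a placeholder. *)
Definition hankel_cofactor u n (j : 'I_n.+1) : R :=
  cofactor (\matrix_(i < n.+1, j < n.+1) (if (i < n)%N then u (i + j)%N else 0)) ord_max j.
Arguments hankel_cofactor : clear implicits.

Lemma det_hankel_lastrow u n (v : 'I_n.+1 -> R) :
  \det (\matrix_(i < n.+1, j < n.+1) (if (i < n)%N then u (i + j)%N else v j)) =
  \sum_j v j * hankel_cofactor u n j.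
Proof.
rewrite (expand_det_row _ ord_max); apply: eq_bigr => j _.
rewrite mxE ltnn /hankel_cofactor /cofactor; congr (_ * (_ * \det _)).
by apply/matrixP => a b; rewrite !mxE lift_max ltn_ord.
Qed.

Definition hankel_poly u n : {poly R} := \poly_(j < n.+1) hankel_cofactor u n (inord j).

Lemma det_orthonormal_numerator u n :
  \det (\matrix_(i < n.+1, j < n.+1)
          (if (i < n)%N then (u (i + j)%N)%:P else 'X^j)) = hankel_poly u n.
Proof.
rewrite (expand_det_row _ ord_max) /hankel_poly poly_def; apply: eq_bigr => j _.
have cofE : cofactor (\matrix_(i < n.+1, j < n.+1)
    (if (i < n)%N then (u (i + j)%N)%:P else 'X^j)) ord_max j = (hankel_cofactor u n j)%:P.
  rewrite /hankel_cofactor /cofactor rmorphM rmorphXn rmorphN rmorph1 -det_map_mx.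
  by congr (_ * \det _); apply/matrixP => a b; rewrite !mxE lift_max ltn_ord.
by rewrite cofE mxE ltnn inord_val -mul_polyC mulrC.
Qed.

Lemma hankel_poly_lead u n : (hankel_poly u n)`_n = hankel_det_prev u n.
Proof.
rewrite coef_poly ltnSn /hankel_cofactor /cofactor.
rewrite (_ : inord n = ord_max); last by apply: val_inj; rewrite /= inordK.
rewrite -signr_odd addnn odd_double expr0 mul1r.
case: n => [|m]; first by rewrite det_mx00.
rewrite /= /hankel_det; apply: congr1; apply/matrixP => a b.
by rewrite !mxE !lift_max ltn_ord.
Qed.

Lemma moment_hankel_poly u n i :
  moment u i (hankel_poly u n) = \sum_(k < n.+1) u (i + k)%N * hankel_cofactor u n k.
Proof. by rewrite moment_poly; apply: eq_bigr => k _; rewrite inord_val. Qed.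

(* Row [i] of the Hankel block is repeated as the last row. *)
Lemma hankel_poly_orth u n i : (i < n)%N -> moment u i (hankel_poly u n) = 0.
Proof.
move=> lt_in; rewrite moment_hankel_poly.
rewrite -(det_hankel_lastrow u (fun j : 'I_n.+1 => u (i + j)%N)).
have ne_i_max : inord i != ord_max :> 'I_n.+1.
  by rewrite -(inj_eq val_inj) /= (inordK (ltnW lt_in)) ltn_eqF.
apply: (determinant_alternate ne_i_max) => j.
by rewrite !mxE (inordK (ltnW lt_in)) lt_in ltnn.
Qed.

Lemma hankel_det_moment u n : hankel_det u n = moment u n (hankel_poly u n).
Proof.
rewrite moment_hankel_poly -det_hankel_lastrow /hankel_det.
apply: congr1; apply/matrixP => i j; rewrite !mxE; case: ltnP => // le_ni.
by have -> : i = n :> nat by apply/eqP; rewrite eqn_leq le_ni -ltnS ltn_ord.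
Qed.

Lemma hankel_orth_eq0 u m p : hankel_det_prev u m != 0 -> (size p <= m)%N ->
  (forall i, (i < m)%N -> moment u i p = 0) -> p = 0.
Proof.
case: m => [_|m detm_neq0 size_p orth_p]; first by move/size_poly_leq0P.
pose H : 'M[R]_m.+1 := \matrix_(i, j) u (i + j)%N.
pose v : 'cV[R]_m.+1 := \col_(k < m.+1) p`_k.
have Hv0 : H *m v = 0.
  apply/matrixP => i j; rewrite [RHS]mxE -(orth_p i (ltn_ord i)) (moment_widen _ _ size_p).
  by rewrite mxE; apply: eq_bigr => k _; rewrite !mxE.
have unitH : H \in unitmx by rewrite unitmxE unitfE.
have v0 : v = 0 by rewrite -(mulKmx unitH v) Hv0 mulmx0.
apply/polyP => k; rewrite coef0; case: (ltnP k m.+1) => [lt_km|le_mk].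
  by have /matrixP/(_ (Ordinal lt_km) 0) := v0; rewrite !mxE.
exact: nth_default (leq_trans size_p le_mk).
Qed.

Section OrthogonalCandidate.
Variables (u : nat -> R) (n : nat) (p : {poly R}).
Hypotheses (size_p : size p = n.+1) (orth_p : forall i, (i < n)%N -> moment u i p = 0).

Lemma hankel_polyE : hankel_det_prev u n != 0 ->
  hankel_poly u n = (hankel_det_prev u n / lead_coef p) *: p.
Proof.
move=> det_neq0; have lead_n : lead_coef p = p`_n by rewrite lead_coefE size_p.
have lead_neq0 : p`_n != 0 by rewrite -lead_n lead_coef_eq0 -size_poly_gt0 size_p.
rewrite lead_n; apply/eqP; rewrite -subr_eq0; apply/eqP; apply: (hankel_orth_eq0 det_neq0).
  apply/leq_sizeP => j; rewrite leq_eqVlt => /orP[/eqP<-|lt_nj].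
    by rewrite coefB coefZ hankel_poly_lead mulfVK // subrr.
  have le_pj : (size p <= j)%N by rewrite size_p.
  by rewrite coefB coefZ coef_poly ltnNge lt_nj (nth_default 0 le_pj) mulr0 subr0.
by move=> i lt_in; rewrite momentB momentZ hankel_poly_orth // orth_p // mulr0 subrr.
Qed.

Lemma hankel_det_orth : hankel_det_prev u n != 0 ->
  hankel_det u n = hankel_det_prev u n * (moment u n p / lead_coef p).
Proof. by move=> det_neq0; rewrite hankel_det_moment hankel_polyE // momentZ mulrAC mulrA. Qed.

Lemma orthonormal_polyE : 0 < hankel_det_prev u n -> 0 < moment u n p / lead_coef p ->
  orthonormal_poly u n = (lead_coef p * Num.sqrt (moment u n p / lead_coef p))^-1 *: p.
Proof.
move=> det_gt0 H_gt0; have det_neq0 := lt0r_neq0 det_gt0.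
have lead_neq0 : lead_coef p != 0 by rewrite lead_coef_eq0 -size_poly_gt0 size_p.
rewrite /orthonormal_poly det_orthonormal_numerator hankel_polyE // scalerA.
rewrite hankel_det_orth // mulrA -expr2 sqrtrM ?sqr_ge0 // sqrtr_sqr ger0_norm ?ltW //.
by congr (_ *: _); field; rewrite det_neq0 lead_neq0 lt0r_neq0 ?sqrtr_gt0.
Qed.

End OrthogonalCandidate.

Section MonicRecurrence.
Variables (u : nat -> R) (p : nat -> {poly R}).
Hypotheses (size_p : forall n, size (p n) = n.+1) (p_monic : forall n, p n \is monic).
Hypothesis p_orth : forall n i, (i < n)%N -> moment u i (p n) = 0.
Hypothesis hankel_neq0 : forall n, hankel_det u n != 0.

Lemma moment_monic_neq0 n : moment u n (p n) != 0.
Proof.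
have prev_neq0 : hankel_det_prev u n != 0 by case: n => [|n] //=; exact: oner_neq0.
have := hankel_neq0 n; rewrite (hankel_det_orth (size_p n) (@p_orth n)) //.
by rewrite (monicP (p_monic n)) divr1 mulf_eq0 negb_or => /andP[].
Qed.

Lemma coef_monic_top n : (p n)`_n = 1.
Proof. by rewrite -(monicP (p_monic n)) lead_coefE size_p. Qed.

Lemma coef_monic_gt n j : (n < j)%N -> (p n)`_j = 0.
Proof. by move=> lt_nj; rewrite nth_default ?size_p. Qed.

Lemma monic_orth0 : p 0 = 1.
Proof. by rewrite (size1_polyC (eq_leq (size_p 0))) coef_monic_top. Qed.

Lemma monic_orth1 : p 1 = ('X - (- (p 1)`_0)%:P) * p 0.
Proof.
rewrite monic_orth0 mulr1 polyCN opprK; apply/polyP => -[|[|j]].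
- by rewrite coefD coefX coefC add0r.
- by rewrite coefD coefX coefC coef_monic_top addr0.
- by rewrite coefD coefX coefC coef_monic_gt // addr0.
Qed.

Lemma monic_orth_recurrence n :
  p n.+2 = ('X - ((p n.+1)`_n - (p n.+2)`_n.+1)%:P) * p n.+1
           - (moment u n.+1 (p n.+1) / moment u n (p n))%:P * p n.
Proof.
set c := (p n.+1)`_n - (p n.+2)`_n.+1.
set l := moment u n.+1 (p n.+1) / moment u n (p n).
have D0 : p n.+2 - ('X - c%:P) * p n.+1 + l%:P * p n = 0.
  apply: (@hankel_orth_eq0 u n.+1); first exact: hankel_neq0.
    apply/leq_sizeP => -[|k] // le_nk.
    rewrite coefD coefB mulrBl coefB coefXM !coefCM /= (@coef_monic_gt n k.+1) // mulr0 addr0.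
    have [->|ne_kn] := eqVneq k n; first by rewrite coef_monic_top /c; ring.
    have [->|ne_kn1] := eqVneq k n.+1.
      by rewrite !coef_monic_top coef_monic_gt // mulr0 subr0 subrr.
    by rewrite !coef_monic_gt; [ring | lia..].
  move=> i lt_in1; rewrite momentD momentB mulrBl momentB moment_mulX !moment_polyC.
  rewrite (@p_orth n.+2 i) ?(ltn_trans lt_in1) // (@p_orth n.+1 i) // mulr0 subr0 sub0r.
  case: (ltnP i n) => [lt_in|le_ni]; first by rewrite !p_orth ?mulr0 ?oppr0 ?addr0.
  have -> : i = n by lia.
  by rewrite /l mulfVK ?moment_monic_neq0 // addNr.
by apply/eqP; rewrite -subr_eq0 -D0; apply/eqP; ring.
Qed.

End MonicRecurrence.
End Moments.

(** * The q-binomial theorem and the two moment sequences *)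

Lemma size_linear_leq (R : nzRingType) (a b : R) : (size (a%:P - b *: 'X)%R <= 2)%N.
Proof.
apply: leq_trans (size_polyD _ _) _; rewrite size_polyN geq_max (leq_trans (size_polyC_leq1 _)) //=.
by apply: leq_trans (size_scale_leq _ _) _; rewrite size_polyX.
Qed.

Lemma size_prod_linear_leq (R : nzRingType) i (a b : nat -> R) :
  (size (\prod_(j < i) ((a j)%:P - b j *: 'X))%R <= i.+1)%N.
Proof.
elim: i => [|i IHi]; first by rewrite big_ord0 size_poly1.
rewrite big_ord_recr /=; apply: leq_trans (size_polyMleq _ _) _.
by move: IHi (size_linear_leq (a i) (b i)); set m := size _; set l := size _; lia.
Qed.

Lemma bin2_double n : ('C(n, 2) * 2 + n = n * n)%N.
Proof. by elim: n => // n IHn; rewrite binS bin1; nia. Qed.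

Section QMoments.
Variables (R : rcfType) (q : R).
Hypotheses (q_gt0 : 0 < q) (q_lt1 : q < 1).

Local Notation t := (Num.sqrt q).
Local Notation qfac n := (qpoch q q n).

Lemma q_neq0 : q != 0. Proof. exact: lt0r_neq0. Qed.
Lemma qX_neq0 n : q ^+ n != 0. Proof. exact: expf_neq0 q_neq0. Qed.
Lemma t_gt0 : 0 < t. Proof. by rewrite sqrtr_gt0. Qed.
Lemma tX_neq0 n : t ^+ n != 0. Proof. by rewrite expf_neq0 // lt0r_neq0 ?t_gt0. Qed.
Lemma t_sqr : t ^+ 2 = q. Proof. by rewrite sqr_sqrtr // ltW. Qed.
Lemma t_neq0 : t != 0. Proof. exact/lt0r_neq0/t_gt0. Qed.

Lemma tV_q : t^-1 * q = t.
Proof. by apply: (mulfI t_neq0); rewrite mulVKf ?t_neq0 // -expr2 t_sqr. Qed.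

Lemma qX_tX n : q ^+ n = t ^+ (2 * n). Proof. by rewrite exprM t_sqr. Qed.

Lemma qX_affine a b c m : (a = b * m + c)%N -> q ^+ a = (q ^+ m) ^+ b * q ^+ c.
Proof. by move=> ->; rewrite exprD -exprM mulnC. Qed.

Lemma qpoch0 a : qpoch a q 0 = 1. Proof. by rewrite /qpoch big_ord0. Qed.

Lemma qpoch0l n : qpoch 0 q n = 1.
Proof. by rewrite /qpoch big1 // => j _; rewrite mul0r subr0. Qed.

Lemma qpochS a n : qpoch a q n.+1 = qpoch a q n * (1 - a * q ^+ n).
Proof. by rewrite /qpoch big_ord_recr. Qed.

Lemma qpochSl a n : qpoch a q n.+1 = (1 - a) * qpoch (a * q) q n.
Proof.
rewrite /qpoch big_ord_recl mulr1; congr (_ * _).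
by apply: eq_bigr => j _; rewrite exprS mulrA.
Qed.

Lemma qfacS n : qfac n.+1 = qfac n * (1 - q ^+ n.+1).
Proof. by rewrite qpochS -exprS. Qed.

Lemma qfacD k i : qfac (k + i) = qfac k * qpoch (q ^+ k.+1) q i.
Proof.
elim: i => [|i IHi]; first by rewrite addn0 qpoch0 mulr1.
by rewrite addnS qfacS IHi qpochS -exprD addSn mulrA.
Qed.

Lemma one_subqX_gt0 n : 0 < 1 - q ^+ n.+1.
Proof. by rewrite subr_gt0 exprn_ilt1 ?ltW. Qed.

Lemma one_subqX_neq0 n : 1 - q ^+ n.+1 != 0.
Proof. exact/lt0r_neq0/one_subqX_gt0. Qed.

Lemma one_subq_neq0 : 1 - q != 0.
Proof. by have := one_subqX_neq0 0; rewrite expr1. Qed.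

Lemma qfac_gt0 n : 0 < qfac n.
Proof. by apply: prodr_gt0 => j _; rewrite -exprS one_subqX_gt0. Qed.

Lemma qfac_neq0 n : qfac n != 0.
Proof. exact/lt0r_neq0/qfac_gt0. Qed.

(* Side conditions left by [field]. *)
Let neq0E :=
  (q_neq0, t_neq0, qX_neq0, tX_neq0, qfac_neq0, one_subqX_neq0, one_subq_neq0, signr_eq0).

Lemma qbinom_nn n : qbinom q n n = 1.
Proof. by rewrite /qbinom subnn qpoch0 mulr1 divff ?qfac_neq0. Qed.

Lemma qbinom_n0 n : qbinom q n 0 = 1.
Proof. by rewrite /qbinom subn0 qpoch0 mul1r divff ?qfac_neq0. Qed.

(* The coefficients of (z;q)_n as a polynomial in z. *)
Definition qbin_coef n k : R :=
  if (k <= n)%N then (-1) ^+ k * qbinom q n k * q ^+ 'C(k, 2) else 0.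

Lemma qbin_coefn0 n : qbin_coef n 0 = 1.
Proof. by rewrite /qbin_coef leq0n qbinom_n0 bin0n expr0 !mulr1. Qed.

Lemma qbin_coef_nn n : qbin_coef n n = (-1) ^+ n * q ^+ 'C(n, 2).
Proof. by rewrite /qbin_coef leqnn qbinom_nn mulr1. Qed.

Lemma qbin_coef_gt n k : (n < k)%N -> qbin_coef n k = 0.
Proof. by rewrite /qbin_coef ltnNge => /negPf ->. Qed.

Lemma qbin_coefSS n k :
  qbin_coef n.+1 k.+1 = q ^+ k.+1 * qbin_coef n k.+1 - q ^+ k * qbin_coef n k.
Proof.
rewrite /qbin_coef ltnS; case: (ltngtP k n) => [lt_kn|_|->]; first last.
- by rewrite !qbinom_nn binS bin1 exprD !exprS; ring.
- by rewrite !mulr0 subr0.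
have [d ->] : exists d, n = (k + d.+1)%N by exists (n - k.+1)%N; lia.
have qXN : q ^+ (k + d.+1).+1 = q ^+ k.+1 * q ^+ d.+1 by rewrite -exprD addSn.
rewrite /qbinom subSS (_ : k + d.+1 - k.+1 = d)%N; last by lia.
rewrite (_ : k + d.+1 - k = d.+1)%N; last by lia.
rewrite (qfacS (k + d.+1)) (qfacS k) (qfacS d) qXN binS bin1 exprD.
have := one_subqX_neq0 k; rewrite !(exprS _ k) => hk.
by field; rewrite ?neq0E hk.
Qed.

Theorem q_binomial n z : \sum_(k < n.+1) qbin_coef n k * z ^+ k = qpoch z q n.
Proof.
elim: n z => [|n IHn] z; first by rewrite big_ord1 qbin_coefn0 qpoch0 mulr1.
rewrite qpochSl -IHn big_ord_recl qbin_coefn0 mul1r.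
under eq_bigr => k _ do rewrite /= /bump /= qbin_coefSS mulrBl.
rewrite sumrB.
have -> : \sum_(k < n.+1) q ^+ k.+1 * qbin_coef n k.+1 * z ^+ k.+1 =
          \sum_(k < n.+1) qbin_coef n k * (z * q) ^+ k - 1.
  rewrite big_ord_recr /= qbin_coef_gt // mulr0 mul0r addr0.
  rewrite [in RHS]big_ord_recl qbin_coefn0 expr0 mul1r addrAC subrr add0r.
  by apply: eq_bigr => k _; rewrite /= /bump /= exprMn; ring.
rewrite mulrBl mul1r mulr_sumr expr0.
have -> : \sum_(i < n.+1) q ^+ i * qbin_coef n i * z ^+ i.+1 =
          \sum_(i < n.+1) z * (qbin_coef n i * (z * q) ^+ i).
  by apply: eq_bigr => k _; rewrite exprMn exprS; ring.
ring.
Qed.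

Lemma qpoch_qVX_eq0 n d : (d < n)%N -> qpoch (q^-1 ^+ d) q n = 0.
Proof.
move=> lt_dn; apply/eqP/prodf_eq0; exists (Ordinal lt_dn) => //=.
by rewrite exprVn mulVf ?subrr ?qX_neq0.
Qed.

Lemma qpoch_qVX n : qpoch (q^-1 ^+ n) q n = (-1) ^+ n * q^-1 ^+ 'C(n.+1, 2) * qfac n.
Proof.
elim: n => [|n IHn]; first by rewrite !qpoch0 expr0 bin_small // expr0 !mulr1.
rewrite qpochSl (_ : q^-1 ^+ n.+1 * q = q^-1 ^+ n); last by rewrite exprSr mulfVK ?q_neq0.
rewrite IHn qfacS (binS n.+1 1) bin1 exprD !exprVn (exprS q) (exprS (-1)).
by field; rewrite ?neq0E.
Qed.

Lemma qX_mul_qVX k m i : (m <= i)%N -> q ^+ k ^+ m * q^-1 ^+ (k * i) = q^-1 ^+ (i - m) ^+ k.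
Proof.
move=> le_mi; rewrite -{1}(subnKC le_mi) mulnDr exprD mulrA -!exprM exprVn.
by rewrite mulfV ?qX_neq0 // mul1r mulnC.
Qed.

Lemma qbin_coef_horner_sum n i (r : {poly R}) : (size r <= i.+1)%N ->
  \sum_(k < n.+1) qbin_coef n k * (r.[q ^+ k] * q^-1 ^+ (k * i)) =
  \sum_(m < i.+1) r`_m * qpoch (q^-1 ^+ (i - m)) q n.
Proof.
move=> size_r.
under eq_bigr => k _ do rewrite (horner_coef_wide _ size_r) mulr_suml mulr_sumr.
rewrite exchange_big /=; apply: eq_bigr => m _.
rewrite -q_binomial mulr_sumr; apply: eq_bigr => k _.
by rewrite -(qX_mul_qVX k (ltnSE (ltn_ord m))); ring.
Qed.

Lemma qbin_coef_orth n i (r : {poly R}) : (i < n)%N -> (size r <= i.+1)%N ->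
  \sum_(k < n.+1) qbin_coef n k * (r.[q ^+ k] * q^-1 ^+ (k * i)) = 0.
Proof.
move=> lt_in size_r; rewrite qbin_coef_horner_sum // big1 // => m _.
by rewrite qpoch_qVX_eq0 ?mulr0 // (leq_ltn_trans (leq_subr _ _) lt_in).
Qed.

Lemma qbin_coef_orth_top n (r : {poly R}) : (size r <= n.+1)%N ->
  \sum_(k < n.+1) qbin_coef n k * (r.[q ^+ k] * q^-1 ^+ (k * n)) =
  r`_0 * qpoch (q^-1 ^+ n) q n.
Proof.
move=> size_r; rewrite qbin_coef_horner_sum // big_ord_recl subn0 big1 ?addr0 // => m _.
by rewrite qpoch_qVX_eq0 ?mulr0 //= /bump /=; have := ltn_ord m; lia.
Qed.

Definition qpoch_poly (c : R) i : {poly R} := \prod_(j < i) (1%:P - (c * q ^+ j) *: 'X).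

Lemma horner_qpoch_poly c i x : (qpoch_poly c i).[x] = qpoch (c * x) q i.
Proof.
rewrite horner_prod; apply: eq_bigr => j _.
by rewrite hornerD hornerN hornerC hornerZ hornerX mulrAC.
Qed.

Lemma size_qpoch_poly c i : (size (qpoch_poly c i) <= i.+1)%N.
Proof. exact: (size_prod_linear_leq i (fun=> 1) (fun j => c * q ^+ j)). Qed.

Lemma qpoch_poly_coef0 c i : (qpoch_poly c i)`_0 = 1.
Proof. by rewrite -horner_coef0 horner_qpoch_poly mulr0 qpoch0l. Qed.

(* Coefficients of the orthogonal polynomials for s and s~, up to a factor depending on n. *)
Definition scoef n k : R := qbin_coef n k * t ^+ (k ^ 2 + 2 * k) / qfac k.
Definition spoly n : {poly R} := \poly_(k < n.+1) scoef n k.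

Lemma mom_s_scoef n i k : mom_s q (i + k) * scoef n k =
  (t ^+ (i.+1 ^ 2))^-1 * (qbin_coef n k * ((qpoch_poly q i).[q ^+ k] * q^-1 ^+ (k * i))).
Proof.
rewrite /mom_s /scoef addnC qfacD horner_qpoch_poly -exprS.
have tE : t ^+ ((k + i).+1 ^ 2) = t ^+ (k ^ 2 + 2 * k) * t ^+ (i.+1 ^ 2) * q ^+ (k * i).
  by rewrite qX_tX -!exprD; congr (_ ^+ _); lia.
by rewrite tE exprVn; field; rewrite ?neq0E.
Qed.

Lemma moment_spoly n i : (i < n)%N -> moment (mom_s q) i (spoly n) = 0.
Proof.
move=> lt_in; rewrite moment_poly; under eq_bigr => k _ do rewrite mom_s_scoef.
by rewrite -mulr_sumr qbin_coef_orth ?size_qpoch_poly ?mulr0.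
Qed.

Lemma moment_spoly_top_sum n :
  moment (mom_s q) n (spoly n) = (t ^+ (n.+1 ^ 2))^-1 * qpoch (q^-1 ^+ n) q n.
Proof.
rewrite moment_poly; under eq_bigr => k _ do rewrite mom_s_scoef.
by rewrite -mulr_sumr qbin_coef_orth_top ?size_qpoch_poly // qpoch_poly_coef0 mul1r.
Qed.

(* D_n / D_(n-1) for the moments s. *)
Definition hs n : R := qfac n ^+ 2 / t ^+ (4 * n ^ 2 + 4 * n + 1).

Lemma hs_gt0 n : 0 < hs n.
Proof. by rewrite divr_gt0 ?exprn_gt0 ?qfac_gt0 ?t_gt0. Qed.

Lemma prod_hs_gt0 n : 0 < \prod_(j < n) hs j.
Proof. by apply: prodr_gt0 => j _; exact: hs_gt0. Qed.

Lemma scoef_nn_neq0 n : scoef n n != 0.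
Proof. by rewrite /scoef qbin_coef_nn !mulf_neq0 ?invr_neq0 ?neq0E. Qed.

Lemma size_spoly n : size (spoly n) = n.+1.
Proof. exact: size_poly_eq (scoef_nn_neq0 n). Qed.

Lemma lead_coef_spoly n : lead_coef (spoly n) = scoef n n.
Proof. exact: lead_coef_poly (scoef_nn_neq0 n). Qed.

Lemma moment_spoly_top n : moment (mom_s q) n (spoly n) / lead_coef (spoly n) = hs n.
Proof.
rewrite moment_spoly_top_sum qpoch_qVX lead_coef_spoly /scoef qbin_coef_nn /hs.
have tE : t ^+ (4 * n ^ 2 + 4 * n + 1) =
    t ^+ (n.+1 ^ 2) * q ^+ 'C(n.+1, 2) * q ^+ 'C(n, 2) * t ^+ (n ^ 2 + 2 * n).
  rewrite !qX_tX -!exprD; congr (_ ^+ _).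
  by have := bin2_double n; have := bin2_double n.+1; nia.
by rewrite tE !exprVn; field; rewrite ?neq0E.
Qed.

Definition st_bracket n k : R := 1 - q ^+ k.+1 - (1 - q ^+ k) * (1 - q ^+ n.+1).
Definition stcoef n k : R := qbin_coef n k * t ^+ (k ^ 2 + 2 * k) / qfac k.+1 * st_bracket n k.
Definition stpoly n : {poly R} := \poly_(k < n.+1) stcoef n k.
Definition st_factor n i : {poly R} :=
  qpoch_poly (q ^+ 2) i * ((q ^+ n.+1)%:P - (q + q ^+ n.+1 - 1) *: 'X).

Lemma mom_st_stcoef n i k : mom_st q (i.+1 + k) * stcoef n k =
  (t ^+ (i.+2 ^ 2))^-1 * (qbin_coef n k * ((st_factor n i).[q ^+ k] * q^-1 ^+ (k * i.+1))).
Proof.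
rewrite addSn /= /mom_s /stcoef /st_factor hornerM horner_qpoch_poly -exprD add2n.
rewrite (_ : (i + k).+1 = k.+1 + i)%N; last by lia.
rewrite qfacD hornerD hornerN hornerC hornerZ hornerX.
have -> : st_bracket n k = q ^+ n.+1 - (q + q ^+ n.+1 - 1) * q ^+ k.
  by rewrite /st_bracket exprS; ring.
have tE : t ^+ ((k.+1 + i).+1 ^ 2) = t ^+ (k ^ 2 + 2 * k) * t ^+ (i.+2 ^ 2) * q ^+ (k * i.+1).
  by rewrite qX_tX -!exprD; congr (_ ^+ _); lia.
by rewrite tE exprVn; field; rewrite ?neq0E.
Qed.

Lemma size_st_factor n i : (size (st_factor n i) <= i.+2)%N.
Proof.
apply: leq_trans (size_polyMleq _ _) _.
move: (size_qpoch_poly (q ^+ 2) i) (size_linear_leq (q ^+ n.+1) (q + q ^+ n.+1 - 1)).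
by set m := size _; set l := size _; lia.
Qed.

Lemma st_factor_coef0 n i : (st_factor n i)`_0 = q ^+ n.+1.
Proof.
rewrite -horner_coef0 hornerM horner_qpoch_poly mulr0 qpoch0l.
by rewrite hornerD hornerN hornerC hornerZ hornerX mulr0 subr0 mul1r.
Qed.

Lemma moment_stpoly_succ n i : (i.+1 < n)%N -> moment (mom_st q) i.+1 (stpoly n) = 0.
Proof.
move=> lt_in; rewrite moment_poly; under eq_bigr => k _ do rewrite mom_st_stcoef.
by rewrite -mulr_sumr qbin_coef_orth ?size_st_factor ?mulr0.
Qed.

Lemma qbin_coef_bracket n k : (k <= n)%N ->
  qbin_coef n k * st_bracket n k / (1 - q ^+ k.+1) =
  qbin_coef n k - qbin_coef n.+1 k.+1 * (1 - q^-1 ^+ k).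
Proof.
move=> le_kn; rewrite /qbin_coef ltnS le_kn /qbinom subSS (qfacS n) (qfacS k) binS bin1 exprD.
rewrite /st_bracket exprVn (exprS (-1)).
have := one_subqX_neq0 k; rewrite !(exprS q) => hk.
by field; rewrite ?neq0E hk.
Qed.

Lemma sum_qbin_coef_qVX n d : (d < n)%N -> \sum_(k < n.+1) qbin_coef n k * q^-1 ^+ d ^+ k = 0.
Proof. by move=> lt_dn; rewrite q_binomial qpoch_qVX_eq0. Qed.

Lemma sum_qbin_coef_bracket n : (0 < n)%N ->
  \sum_(k < n.+1) qbin_coef n k * st_bracket n k / (1 - q ^+ k.+1) = 1 - q.
Proof.
move=> n_gt0; under eq_bigr => k _ do rewrite (qbin_coef_bracket (ltn_ord k : (k <= n)%N)).
rewrite sumrB.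
have -> : \sum_(k < n.+1) qbin_coef n k = 0.
  transitivity (\sum_(k < n.+1) qbin_coef n k * q^-1 ^+ 0 ^+ k); last exact: sum_qbin_coef_qVX.
  by apply: eq_bigr => k _; rewrite expr0 expr1n mulr1.
have : \sum_(m < n.+2) qbin_coef n.+1 m * (1 - q * q^-1 ^+ m) = 0.
  transitivity (\sum_(m < n.+2) qbin_coef n.+1 m * q^-1 ^+ 0 ^+ m
                - q * \sum_(m < n.+2) qbin_coef n.+1 m * q^-1 ^+ 1 ^+ m).
    by rewrite mulr_sumr -sumrB; apply: eq_bigr => m _; rewrite expr0 expr1n expr1; ring.
  by rewrite !sum_qbin_coef_qVX // mulr0 subr0.
rewrite big_ord_recl qbin_coefn0 expr0 mulr1 mul1r.
under eq_bigr => k _ do rewrite /= /bump /= exprS mulrA mulfV ?q_neq0 // mul1r.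
by move/eqP; rewrite addrC addr_eq0 => /eqP ->; rewrite sub0r opprK.
Qed.

(* The modified moment s~_0 is what makes the row i = 0 orthogonal as well. *)
Lemma moment_stpoly0 n : (0 < n)%N -> moment (mom_st q) 0 (stpoly n) = 0.
Proof.
move=> n_gt0; rewrite moment_poly big_ord_recl.
have -> : mom_st q (0 + 0) * stcoef n 0 = t.
  rewrite /= /stcoef /st_bracket qbin_coefn0 qfacS qpoch0 !expr0 subrr mul0r subr0 !mul1r.
  by rewrite subKr expr1 mulVf ?one_subq_neq0 // mulr1 tV_q.
have termE (k : 'I_n) : mom_st q (0 + bump 0 k) * stcoef n (bump 0 k) =
    t^-1 * (qbin_coef n k.+1 * st_bracket n k.+1 / (1 - q ^+ k.+2)).
  rewrite /bump /= /mom_s /stcoef qfacS.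
  have tE : t ^+ (k.+2 ^ 2) = t * t ^+ (k.+1 ^ 2 + 2 * k.+1) by rewrite -exprS; congr (_ ^+ _); lia.
  by rewrite tE; field; rewrite ?neq0E.
have sum_tail : \sum_(k < n) qbin_coef n k.+1 * st_bracket n k.+1 / (1 - q ^+ k.+2) = - q.
  apply: (@addrI _ 1); rewrite -[1 + - q](sum_qbin_coef_bracket n_gt0) big_ord_recl.
  congr (_ + _); rewrite qbin_coefn0 /st_bracket expr0 subrr mul0r subr0 mul1r expr1.
  by rewrite divff ?one_subq_neq0.
by rewrite (eq_bigr _ (fun k _ => termE k)) -mulr_sumr sum_tail mulrN tV_q subrr.
Qed.

Lemma moment_stpoly n i : (i < n)%N -> moment (mom_st q) i (stpoly n) = 0.
Proof. by case: i => [|i]; [exact: moment_stpoly0 | exact: moment_stpoly_succ]. Qed.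

Lemma stcoef_nn n : stcoef n n = scoef n n * q ^+ n.
Proof.
rewrite /stcoef /scoef qfacS /st_bracket.
have := one_subqX_neq0 n; rewrite !(exprS q) => hn.
by field; rewrite ?neq0E hn.
Qed.

Lemma stcoef_nn_neq0 n : stcoef n n != 0.
Proof. by rewrite stcoef_nn mulf_neq0 ?scoef_nn_neq0 ?qX_neq0. Qed.

Lemma size_stpoly n : size (stpoly n) = n.+1.
Proof. exact: size_poly_eq (stcoef_nn_neq0 n). Qed.

Lemma lead_coef_stpoly n : lead_coef (stpoly n) = stcoef n n.
Proof. exact: lead_coef_poly (stcoef_nn_neq0 n). Qed.

Lemma moment_stpoly_top_sum n :
  moment (mom_st q) n.+1 (stpoly n.+1) = q ^+ n.+2 * moment (mom_s q) n.+1 (spoly n.+1).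
Proof.
rewrite moment_spoly_top_sum moment_poly; under eq_bigr => k _ do rewrite mom_st_stcoef.
by rewrite -mulr_sumr qbin_coef_orth_top ?size_st_factor // st_factor_coef0 mulrCA.
Qed.

Lemma moment_stpoly_top n : moment (mom_st q) n (stpoly n) / lead_coef (stpoly n) = q * hs n.
Proof.
case: n => [|n].
  rewrite moment_poly big_ord1 lead_coef_stpoly mulfK ?stcoef_nn_neq0 //= /hs qpoch0.
  by rewrite subKr expr1n mul1r mulrC.
rewrite lead_coef_stpoly stcoef_nn -(moment_spoly_top n.+1) moment_stpoly_top_sum.
rewrite lead_coef_spoly exprS; have := scoef_nn_neq0 n.+1.
by move=> hs_neq0; field; rewrite ?neq0E hs_neq0.
Qed.

Lemma hankel_det_prev_s n : hankel_det_prev (mom_s q) n = \prod_(j < n) hs j.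
Proof.
elim: n => [|n IHn]; first by rewrite big_ord0.
rewrite big_ord_recr -IHn -(moment_spoly_top n) /=.
by apply: hankel_det_orth (size_spoly n) (@moment_spoly n) _; rewrite IHn lt0r_neq0 ?prod_hs_gt0.
Qed.

Lemma hankel_det_prev_st n : hankel_det_prev (mom_st q) n = q ^+ n * \prod_(j < n) hs j.
Proof.
elim: n => [|n IHn]; first by rewrite big_ord0 mulr1.
have prev_neq0 : hankel_det_prev (mom_st q) n != 0.
  by rewrite IHn mulf_neq0 ?qX_neq0 ?lt0r_neq0 ?prod_hs_gt0.
rewrite /= (hankel_det_orth (size_stpoly n) (@moment_stpoly n) prev_neq0).
by rewrite moment_stpoly_top IHn big_ord_recr exprS /=; ring.
Qed.

Lemma sqrt_q_hs n : Num.sqrt (q * hs n) = qfac n * Num.sqrt t / t ^+ (2 * n ^ 2 + 2 * n).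
Proof.
have r_sqr : Num.sqrt t ^+ 2 = t by rewrite sqr_sqrtr // ltW ?t_gt0.
have ge0 : 0 <= qfac n * Num.sqrt t / t ^+ (2 * n ^ 2 + 2 * n).
  by rewrite !(mulr_ge0, invr_ge0, exprn_ge0, sqrtr_ge0) ?ltW ?qfac_gt0 ?t_gt0.
rewrite -[RHS](ger0_norm ge0) -sqrtr_sqr; congr Num.sqrt.
rewrite /hs expr_div_n exprMn r_sqr -exprM.
have tE : t ^+ (4 * n ^ 2 + 4 * n + 1) = t ^+ ((2 * n ^ 2 + 2 * n) * 2) * t.
  by rewrite -exprSr; congr (_ ^+ _); lia.
by rewrite tE -[q in q * _]t_sqr; field; rewrite ?neq0E.
Qed.

Lemma lead_stpoly_sqrt n : stcoef n n * Num.sqrt (q * hs n) = (-1) ^+ n * (t ^+ n * Num.sqrt t).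
Proof.
rewrite stcoef_nn sqrt_q_hs /scoef qbin_coef_nn.
have tE : t ^+ (2 * n ^ 2 + 2 * n) = t ^+ (n ^ 2 + 2 * n) * q ^+ 'C(n, 2) * q ^+ n / t ^+ n.
  apply: (canRL (mulfK (tX_neq0 n))); rewrite !qX_tX -!exprD; congr (_ ^+ _).
  by have := bin2_double n; nia.
by rewrite tE; field; rewrite ?neq0E.
Qed.

Lemma orthonormal_poly_st n : orthonormal_poly (mom_st q) n = Ct q n *: stpoly n.
Proof.
have det_gt0 : 0 < hankel_det_prev (mom_st q) n.
  by rewrite hankel_det_prev_st mulr_gt0 ?exprn_gt0 ?prod_hs_gt0.
rewrite (orthonormal_polyE (size_stpoly n) (@moment_stpoly n)) //; last first.
  by rewrite moment_stpoly_top mulr_gt0 ?hs_gt0.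
by rewrite moment_stpoly_top lead_coef_stpoly lead_stpoly_sqrt invfM -exprVn invrN1.
Qed.

Lemma coef_orthonormal_poly_st n k : (k <= n)%N ->
  (orthonormal_poly (mom_st q) n)`_k = Ct q n * stcoef n k.
Proof. by rewrite orthonormal_poly_st coefZ coef_poly ltnS => ->. Qed.

Lemma stcoefE n k : (k <= n)%N ->
  stcoef n k = (-1) ^+ k * qbinom q n k * (q ^+ (k ^ 2) * t ^+ k) / qfac k.+1 * st_bracket n k.
Proof.
move=> le_kn; rewrite /stcoef /qbin_coef le_kn.
have -> : q ^+ (k ^ 2) * t ^+ k = q ^+ 'C(k, 2) * t ^+ (k ^ 2 + 2 * k).
  by rewrite !qX_tX -!exprD; congr (_ ^+ _); have := bin2_double k; nia.
by ring.
Qed.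

Lemma Ct_stcoef_bcoef n k :
  Ct q n * (-1) ^+ k * qbinom q n k * (q ^+ (k ^ 2) * t ^+ k) / qfac k.+1
    * (1 - q ^+ k.+1 - (1 - q ^+ k) * (1 - q ^+ n.+1)) =
  bcoef q k n * (q ^+ n * t)^-1 * (1 - (1 - q ^+ k) * (1 - q ^+ n.+1) / (1 - q ^+ k.+1)).
Proof.
rewrite /Ct /bcoef qfacS exprD (qX_tX n) mul2n -addnn exprD.
have r_sqr : Num.sqrt t ^+ 2 = t by rewrite sqr_sqrtr // ltW ?t_gt0.
have r_neq0 : Num.sqrt t != 0 by rewrite lt0r_neq0 // sqrtr_gt0 t_gt0.
move: (Num.sqrt t) r_sqr r_neq0 => r r_sqr r_neq0; rewrite -r_sqr.
by field; rewrite ?neq0E r_neq0 -exprM expf_neq0.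
Qed.

Lemma Ct_neq0 n : Ct q n != 0.
Proof.
rewrite /Ct mulf_neq0 ?signr_eq0 // invr_neq0 // mulf_neq0 ?tX_neq0 //.
by rewrite sqrtr_eq0 -ltNge t_gt0.
Qed.

Lemma monic_ptE n : monic_pt q n = (stcoef n n)^-1 *: stpoly n.
Proof.
rewrite /monic_pt orthonormal_poly_st coefZ coef_poly ltnSn scalerA invfM mulrAC.
by rewrite mulVf ?Ct_neq0 ?mul1r.
Qed.

Lemma size_monic_pt n : size (monic_pt q n) = n.+1.
Proof. by rewrite monic_ptE size_scale ?invr_neq0 ?stcoef_nn_neq0 ?size_stpoly. Qed.

Lemma monic_pt_monic n : monic_pt q n \is monic.
Proof. by rewrite monicE monic_ptE lead_coefZ lead_coef_stpoly mulVf ?stcoef_nn_neq0. Qed.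

Lemma moment_monic_pt n i : (i < n)%N -> moment (mom_st q) i (monic_pt q n) = 0.
Proof. by move=> lt_in; rewrite monic_ptE momentZ moment_stpoly ?mulr0. Qed.

Lemma moment_monic_pt_top n : moment (mom_st q) n (monic_pt q n) = q * hs n.
Proof. by rewrite monic_ptE momentZ mulrC -lead_coef_stpoly moment_stpoly_top. Qed.

Lemma hankel_det_st_neq0 n : hankel_det (mom_st q) n != 0.
Proof.
have -> : hankel_det (mom_st q) n = hankel_det_prev (mom_st q) n.+1 by [].
by rewrite hankel_det_prev_st mulf_neq0 ?qX_neq0 ?lt0r_neq0 ?prod_hs_gt0.
Qed.

Definition st_sublead j : R :=
  - (1 - q ^+ j.+1) * st_bracket j.+1 j / ((1 - q) * q ^+ (3 * j + 2) * t).

Lemma coef_monic_pt_sublead j : (monic_pt q j.+1)`_j = st_sublead j.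
Proof.
rewrite monic_ptE coefZ coef_poly ltnW // mulrC stcoef_nn /stcoef /scoef qbin_coef_nn.
rewrite /qbin_coef ltnW // /qbinom (_ : j.+1 - j = 1)%N; last by lia.
rewrite (qfacS 0) qpoch0 mul1r binS bin1 /st_sublead.
have tE : t ^+ (j.+1 ^ 2 + 2 * j.+1) = t ^+ (j ^ 2 + 2 * j) * q ^+ 'C(j, 2) * q ^+ (3 * j + 2) * t
    / (q ^+ ('C(j, 2) + j) * q ^+ j.+1).
  apply: (canRL (mulfK _)); first by rewrite mulf_neq0 ?qX_neq0.
  by rewrite !qX_tX -!exprD -exprSr; congr (_ ^+ _); lia.
by rewrite tE (exprS (-1) j) (qfacS j); field; rewrite ?neq0E.
Qed.

Lemma ct1 : ct q 1 = - st_sublead 0.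
Proof. by rewrite /ct /st_sublead /st_bracket; field; rewrite ?neq0E. Qed.

Lemma ctSS m : ct q m.+2 = st_sublead m - st_sublead m.+1.
Proof.
rewrite /ct /st_sublead /st_bracket.
(* Write every power of q as a power of q^m times a constant, so that [field] sees one atom. *)
rewrite (@qX_affine (2 * m.+2) 2 4 m); last by lia.
rewrite (@qX_affine (3 * m + 2) 3 2 m); last by lia.
rewrite (@qX_affine (3 * m.+1 + 2) 3 5 m); last by lia.
by rewrite !exprS ?expr0; field; rewrite ?neq0E.
Qed.

Lemma lt_coefSS m : lt_coef q m.+2 = hs m.+1 / hs m.
Proof.
rewrite /lt_coef /hs /= qfacS.
have tE : t ^+ (4 * m.+1 ^ 2 + 4 * m.+1 + 1) = t ^+ (4 * m ^ 2 + 4 * m + 1) * q ^+ (4 * m.+1).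
  by rewrite qX_tX -exprD; congr (_ ^+ _); lia.
by rewrite tE; field; rewrite ?neq0E.
Qed.

Lemma monic_pt_recurrence n : (1 <= n)%N ->
  monic_pt q n = ('X - (ct q n)%:P) * monic_pt q n.-1
                 - (lt_coef q n)%:P * (if n is 1 then 0 else monic_pt q n.-2).
Proof.
case: n => [|[|n]] // _.
  rewrite mulr0 subr0 ct1 -coef_monic_pt_sublead.
  exact: (monic_orth1 size_monic_pt monic_pt_monic).
rewrite [LHS](monic_orth_recurrence size_monic_pt monic_pt_monic moment_monic_pt
                                   hankel_det_st_neq0).
rewrite /= ctSS lt_coefSS -!coef_monic_pt_sublead !moment_monic_pt_top.
by congr (_ - (_)%:P * _); field; rewrite ?neq0E lt0r_neq0 ?hs_gt0.
Qed.

Lemma hankel_det_st_s n : hankel_det (mom_st q) n = q ^+ n.+1 * hankel_det (mom_s q) n.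
Proof.
rewrite -[hankel_det (mom_st q) n]/(hankel_det_prev _ n.+1).
by rewrite -[hankel_det (mom_s q) n]/(hankel_det_prev _ n.+1) hankel_det_prev_st hankel_det_prev_s.
Qed.

End QMoments.

Theorem corollary1 (R : rcfType) (q : R) (hq0 : 0 < q) (hq1 : q < 1) :
  (forall n k : nat, (k <= n)%N ->
     (orthonormal_poly (mom_st q) n)`_k =
       Ct q n * (-1) ^+ k * qbinom q n k
       * (q ^+ (k ^ 2) * (Num.sqrt q) ^+ k) / qpoch q q k.+1
       * (1 - q ^+ k.+1 - (1 - q ^+ k) * (1 - q ^+ n.+1))
     /\
     (orthonormal_poly (mom_st q) n)`_k =
       bcoef q k n * (q ^+ n * Num.sqrt q)^-1
       * (1 - (1 - q ^+ k) * (1 - q ^+ n.+1) / (1 - q ^+ k.+1)))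
  /\ (forall n : nat, hankel_det (mom_st q) n = q ^+ n.+1 * hankel_det (mom_s q) n)
  /\ (forall n : nat, (1 <= n)%N ->
        monic_pt q n =
          ('X - (ct q n)%:P) * monic_pt q n.-1
          - (lt_coef q n)%:P * (if n is 1 then 0 else monic_pt q n.-2)).
Proof.
split; [|split].
- move=> n k le_kn; rewrite -(Ct_stcoef_bcoef hq0 hq1) (coef_orthonormal_poly_st hq0 hq1 le_kn).
  by rewrite (stcoefE hq0 le_kn) /st_bracket !mulrA.
- exact: hankel_det_st_s hq0 hq1.
- exact: monic_pt_recurrence hq0 hq1.
Qed.
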